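(* Let $H=\Bbbk^G{}^\tau\#_\sigma\Bbbk F$ be as in the context and fix $f\in F$. The assignment $V\mapsto\tilde V=(V\otimes\Bbbk f)\Box_{H'_f}H$ is the object map of an equivalence of categories from the category of right $\Bbbk^{G_f}_{\tau_f}$-comodules to the category of right $C_f$-comodules, where $C_f=\mathrm{span}\{p_g\#(g'\triangleright f)\mid g,g'\in G\}$. This equivalence induces an isomorphism between the Grothendieck groups $\mathrm{Gr}(\Bbbk^{G_f}_{\tau_f}\text{-Comod})$ and $\mathrm{Gr}(C_f\text{-Comod})$.
   Context: Standing setup: $\Bbbk$ is an algebraically closed field of characteristic $0$, $F$ a group (possibly infinite), $G$ a finite group, and $(F,G,\triangleleft,\triangleright)$ a matched pair: $\triangleright:G\times F\to F$ a left action of $G$ on the set $F$, $\triangleleft:G\times F\to G$ a right action of $F$ on the set $G$, with $g\triangleright(ff')=(g\triangleright f)((g\triangleleft f)\triangleright f')$ and $(gg')\triangleleft f=(g\triangleleft(g'\triangleright f))(g'\triangleleft f)$. Maps $\sigma:G\times F\times F\to\Bbbk^\times$ and $\tau:G\times G\times F\to\Bbbk^\times$ satisfy: $\sigma(g;1_F,f)=\sigma(g;f,1_F)=\sigma(1_G;f,f')=1$; $\sigma(g\triangleleft f;f',f'')\sigma(g;f,f'f'')=\sigma(g;f,f')\sigma(g;ff',f'')$; $\tau(1_G,g;f)=\tau(g,1_G;f)=\tau(g,g';1_F)=1$; $\tau(g,g';g''\triangleright f)\tau(gg',g'';f)=\tau(g,g'g'';f)\tau(g',g'';f)$; and $\sigma(gg';f,f')\tau(g,g';ff')=\sigma(g;g'\triangleright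 f,(g'\triangleleft f)\triangleright f')\sigma(g';f,f')\tau(g,g';f)\tau(g\triangleleft(g'\triangleright f),g'\triangleleft f;f')$. $H$ has basis $\{p_g\#f\}$, product $(p_g\#f)(p_{g'}\#f')=\delta_{g\triangleleft f,g'}\sigma(g;f,f')p_g\#ff'$, coproduct $\Delta(p_g\#f)=\sum_{x\in G}\tau(gx^{-1},x;f)\,p_{gx^{-1}}\#(x\triangleright f)\otimes p_x\#f$, counit $\varepsilon(p_g\#f)=\delta_{g,1_G}$; $C_f$ is a subcoalgebra. $G_f=\{g\in G\mid g\triangleright f=f\}$. $\Bbbk^{G_f}_{\tau_f}$ is the coalgebra with basis $\{p_g\}_{g\in G_f}$, $\Delta(p_g)=\sum_{x\in G_f}\tau(gx^{-1},x;f)p_{gx^{-1}}\otimes p_x$, $\varepsilon(p_g)=\delta_{g,1_G}$. $H'_f$ is the coalgebra with basis $\{p_g\#f'\mid g\in G_f,f'\in F\}$ and $\Delta(p_g\#f')=\sum_{x\in G_f}\tau(gx^{-1},x;f')p_{gx^{-1}}\#(x\triangleright f')\otimes p_x\#f'$; $H$ is a left $H'_f$-comodule via $(\pi_f\otimes\mathrm{id})\Delta$ with $\pi_f$ killing $p_g\#f'$ for $g\notin G_f$. For a right $\Bbbk^{G_f}_{\tau_f}$-comodule $V$ with $\rho(v)=\sum_{g\in G_f}v_g\otimes p_g$, $V\otimes\Bbbk f$ is a right $H'_f$-comodule by $v\otimes f\mapsto\sum_{g}v_g\otimes f\otimes p_g\#f$, and $\tilde V=(V\otimes\Bbbk f)\Box_{H'_f}H$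 is the cotensor product, a right $H$-comodule (in fact a $C_f$-comodule) via $\mathrm{id}\otimes\Delta$. *)

From HB Require Import structures.
From mathcomp Require Import all_boot all_order all_algebra all_fingroup.
From mathcomp Require Import boolp classical_sets functions cardinality fsbigop.

Set Implicit Arguments.
Unset Strict Implicit.
Unset Printing Implicit Defensive.
Import GRing.Theory.
Local Open Scope ring_scope.

(* lact g x  is  g |> x   (left action of G on the set F)                     *)
(* ract g x  is  g <| x   (right action of F on the set G)                    *)

Definition is_matched_pair (F : groupType) (G : finGroupType)
    (lact : G -> F -> F) (ract : G -> F -> G) : Prop :=
  (forall x, lact 1%g x = x) /\
  (forall g g' x, lact (g * g')%g x = lact g (lact g' x)) /\
  (forall g, ract g 1%g = g) /\
  (forall g x y, ract g (x * y)%g = ract (ract g x) y) /\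
  (forall g x y, lact g (x * y)%g = (lact g x * lact (ract g x) y)%g) /\
  (forall g g' x, ract (g * g')%g x = (ract g (lact g' x) * ract g' x)%g).

Definition sigma_tau_conditions (K : fieldType) (F : groupType) (G : finGroupType)
    (lact : G -> F -> F) (ract : G -> F -> G)
    (sigma : G -> F -> F -> K) (tau : G -> G -> F -> K) : Prop :=
  (forall g x y, sigma g x y != 0) /\
  (forall g g' x, tau g g' x != 0) /\
  (forall g x, sigma g 1%g x = 1 /\ sigma g x 1%g = 1) /\
  (forall x y, sigma 1%g x y = 1) /\
  (forall g x y z,
      sigma (ract g x) y z * sigma g x (y * z)%g
      = sigma g x y * sigma g (x * y)%g z) /\
  (forall g x, tau 1%g g x = 1 /\ tau g 1%g x = 1) /\
  (forall g g', tau g g' 1%g = 1) /\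
  (forall g g' g'' x,
      tau g g' (lact g'' x) * tau (g * g')%g g'' x
      = tau g (g' * g'')%g x * tau g' g'' x) /\
  (forall g g' x y,
      sigma (g * g')%g x y * tau g g' (x * y)%g
      = sigma g (lact g' x) (lact (ract g' x) y) * sigma g' x y * tau g g' x
        * tau (ract g (lact g' x)) (ract g' x) y).

(* Coalgebras with a distinguished basis.  A coalgebra is given by a basis    *)
(* type B, a predicate S : pred B selecting the basis elements spanning the   *)
(* (sub)coalgebra, structure constants D b b1 b2 (Delta(b) = sum D b b1 b2    *)
(* b1 (x) b2) and the counit values e b.                                      *)
(* A right comodule over such a coalgebra C = span S: an ambient K-space amb, *)
(* a subspace csp of it (the comodule itself), and the coaction written in    *)
(* coordinates: rho(v) = sum_b (cco v b) (x) b, cco v b = 0 for b not in S.   *)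

Record comod (K : fieldType) (B : Type) := Comod {
  camb : lmodType K;
  csp : camb -> Prop;
  cco : camb -> B -> camb }.
Arguments Comod {K B}.
Arguments camb {K B}.
Arguments csp {K B}.
Arguments cco {K B}.

Section Comodules.
Variables (K : fieldType) (B : choiceType) (S : pred B)
          (D : B -> B -> B -> K) (e : B -> K).

Definition is_comod (M : comod K B) : Prop :=
  csp M 0 /\
  (forall (a : K) v w, csp M v -> csp M w -> csp M (a *: v + w)) /\
  (forall v b, csp M v -> csp M (cco M v b)) /\
  (forall (a : K) v w b, csp M v -> csp M w ->
      cco M (a *: v + w) b = a *: cco M v b + cco M w b) /\
  (forall v, csp M v -> finite_set [set b | cco M v b != 0]) /\
  (forall v b, csp M v -> ~~ S b -> cco M v b = 0) /\
  (* coassociativity: (rho (x) id) rho = (id (x) Delta) rho *)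
  (forall v b1 b2, csp M v ->
      cco M (cco M v b2) b1 = \sum_(b \in setT) D b b1 b2 *: cco M v b) /\
  (forall v, csp M v -> \sum_(b \in setT) e b *: cco M v b = v).

Definition comod_hom (M N : comod K B) (phi : camb M -> camb N) : Prop :=
  (forall v, csp M v -> csp N (phi v)) /\
  (forall (a : K) v w, csp M v -> csp M w -> phi (a *: v + w) = a *: phi v + phi w) /\
  (forall v b, csp M v -> cco N (phi v) b = phi (cco M v b)).

Definition hom_eq (M N : comod K B) (phi psi : camb M -> camb N) : Prop :=
  forall v, csp M v -> phi v = psi v.

Definition comod_iso (M N : comod K B) : Prop :=
  exists (phi : camb M -> camb N) (psi : camb N -> camb M),
    [/\ comod_hom phi, comod_hom psi,
        (forall v, csp M v -> psi (phi v) = v) &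
        (forall w, csp N w -> phi (psi w) = w)].

Definition fin_dim (M : comod K B) : Prop :=
  exists s : seq (camb M), (forall i, (i < size s)%N -> csp M (nth 0 s i)) /\
    forall v, csp M v -> exists c : 'I_(size s) -> K,
      v = \sum_(i < size s) c i *: nth 0 s i.

Definition fd_comod (M : comod K B) : Prop := is_comod M /\ fin_dim M.

Definition short_exact (M1 M M2 : comod K B)
    (i : camb M1 -> camb M) (p : camb M -> camb M2) : Prop :=
  [/\ comod_hom i, comod_hom p,
      (forall v w, csp M1 v -> csp M1 w -> i v = i w -> v = w),
      (forall u, csp M2 u -> exists2 v, csp M v & p v = u) &
      (forall v, csp M v -> (p v = 0 <-> exists2 w, csp M1 w & i w = v))].

(* Grothendieck group of the category of finite-dimensional comodules:       *)
(* formal Z-linear combinations of objects modulo the congruence generated by *)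
(* [M] = [M1] + [M2] for short exact sequences.                               *)
Definition fsum := seq (int * comod K B).

Definition valid_fsum (s : fsum) : Prop :=
  foldr (fun p acc => fd_comod p.2 /\ acc) True s.

Inductive gr_eq : fsum -> fsum -> Prop :=
  | gr_refl s : gr_eq s s
  | gr_sym s t : gr_eq s t -> gr_eq t s
  | gr_trans s t u : gr_eq s t -> gr_eq t u -> gr_eq s u
  | gr_catl u s t : gr_eq s t -> gr_eq (u ++ s) (u ++ t)
  | gr_catr u s t : gr_eq s t -> gr_eq (s ++ u) (t ++ u)
  | gr_comm s t : gr_eq (s ++ t) (t ++ s)
  | gr_merge (a b : int) M s : gr_eq ((a, M) :: (b, M) :: s) ((a + b, M) :: s)
  | gr_zero M s : gr_eq ((0, M) :: s) s
  | gr_ses M1 M M2 i p s : fd_comod M1 -> fd_comod M -> fd_comod M2 ->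
      @short_exact M1 M M2 i p -> gr_eq ((1, M) :: s) ((1, M1) :: (1, M2) :: s).

End Comodules.

Section Concrete.
Variables (K : fieldType) (F : groupType) (G : finGroupType)
          (lact : G -> F -> F) (tau : G -> G -> F -> K) (f : F).

Definition Gf : pred G := [pred g | lact g f == f].

(* k^{G_f}_{tau_f}: basis p_g, g in G_f;
   Delta(p_g) = sum_{x in G_f} tau(g x^-1, x; f) p_{g x^-1} (x) p_x *)
Definition DGf (g g1 g2 : G) : K :=
  if Gf g2 && (g1 == g * g2^-1)%g then tau g1 g2 f else 0.
Definition eG (g : G) : K := (g == 1%g)%:R.

(* H with basis p_g # x indexed by G * F;
   Delta(p_g#x) = sum_{y in G} tau(g y^-1, y; x) p_{g y^-1}#(y |> x) (x) p_y#x *)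
Definition DH (n n1 n2 : (G * F)%type) : K :=
  if [&& n2.2 == n.2, n1.1 == (n.1 * n2.1^-1)%g & n1.2 == lact n2.1 n.2]
  then tau n1.1 n2.1 n.2 else 0.
Definition eH (n : (G * F)%type) : K := (n.1 == 1%g)%:R.

Definition Cf : pred (G * F)%type := [pred n | [exists g', n.2 == lact g' f]].

(* H'_f has basis p_g # x with g in G_f, x in F;
   H is a left H'_f-comodule via (pi_f (x) id) Delta, i.e.
   lambda(n) = sum_{b, n'} Hprime_lcoeff n b n' b (x) n'. *)
Definition Hprime_lcoeff (n b n' : (G * F)%type) : K :=
  if Gf b.1 then DH n b n' else 0.

Section Cotensor.
Variable V : comod K G.

(* The H'_f-coaction on V (x) kf (identified with V):
   v (x) f |-> sum_g v_g (x) f (x) p_g#f. *)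
Definition Vf_coact (v : camb V) (b : (G * F)%type) : camb V :=
  if b.2 == f then cco V v b.1 else 0.

(* (V (x) kf) (x) H is realised as the finitely supported functions
   G * F -> V  (x = sum_n x(n) (x) f (x) n). *)
Definition cot_amb : lmodType K := ((G * F)%type -> camb V).

Definition cot_sp (x : cot_amb) : Prop :=
  finite_set [set n | x n != 0] /\
  (forall n, csp V (x n)) /\
  (forall (b : (G * F)%type) (n' : (G * F)%type), Gf b.1 ->
     Vf_coact (x n') b = \sum_(n \in setT) Hprime_lcoeff n b n' *: x n).

Definition cot_co (x : cot_amb) (n2 : (G * F)%type) : cot_amb :=
  fun n1 => \sum_(n \in setT) DH n n1 n2 *: x n.

Definition cotensor : comod K (G * F)%type := Comod cot_amb cot_sp cot_co.

End Cotensor.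

Definition cot_hom (V V' : comod K G) (phi : camb V -> camb V')
  : camb (cotensor V) -> camb (cotensor V') := fun x n => phi (x n).


Definition cot_fsum (s : fsum K G) : fsum K (G * F)%type :=
  map (fun p => (p.1, cotensor p.2)) s.

End Concrete.

Arguments cot_hom {K F G} lact tau f {V V'} phi _ : rename.

(* An element x of ~V lives on the pairs (a, c) with a |> c = f, and the
   cotensor condition says that along each such fibre c its values are the
   G_f-coaction of a single vector, twisted by tau: so x is freely determined by
   one value of V per point of the G-orbit of f, and evaluation at p_1 # f
   recovers V from ~V.  Conversely a C_f-comodule N is rebuilt from
   N_f = { w | w_(p_1 # f) = w } by translating along the orbit, the tau-twists
   cancelling by the cocycle identity.  Both functors preserve finite dimension
   and short exact sequences, so they induce mutually inverse maps of
   Grothendieck groups. *)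

From HB Require Import structures.
From mathcomp Require Import all_boot all_order all_algebra all_fingroup.
From mathcomp Require Import finmap boolp classical_sets functions cardinality fsbigop.

Set Implicit Arguments.
Unset Strict Implicit.
Unset Printing Implicit Defensive.
Import GRing.Theory.
Local Open Scope ring_scope.
Local Open Scope classical_set_scope.

Lemma fsbigT_single (T : choiceType) (R : nmodType) (F : T -> R) t :
  (forall s, s != t -> F s = 0) -> \sum_(s \in [set: T]) F s = F t.
Proof.
move=> Ft; rewrite -(fsbig_widen [set t]) ?fsbig_set1 // => s [_ /eqP].
by move/Ft.
Qed.
Arguments fsbigT_single {T R F} t.

Lemma fsbigT_apply (T : choiceType) (X : Type) (R : nmodType) (F : T -> X -> R)
    (A : set T) x :
  finite_set A -> (forall t, ~ A t -> F t = 0) ->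
  (\sum_(t \in [set: T]) F t) x = \sum_(t \in [set: T]) F t x.
Proof.
move=> finA FA; have F0 t : t \notin fset_set A -> F t = 0.
  by rewrite in_fset_set // notin_setE => /FA.
rewrite (fsbigTE (fset_set A)) => [|t /F0 //].
by rewrite (fsbigTE (fset_set A)) ?fct_sumE // => t /F0 ->.
Qed.

Section Subspaces.
Variables (K : fieldType) (M N : lmodType K).

Definition subspace (P : M -> Prop) : Prop :=
  P 0 /\ forall (a : K) v w, P v -> P w -> P (a *: v + w).

Definition linear_on (P : M -> Prop) (phi : M -> N) : Prop :=
  forall (a : K) v w, P v -> P w -> phi (a *: v + w) = a *: phi v + phi w.

Section OneSubspace.
Variable P : M -> Prop.
Hypothesis hP : subspace P.

Lemma subspace0 : P 0. Proof. by case: hP. Qed.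

Lemma subspaceL a v w : P v -> P w -> P (a *: v + w).
Proof. by case: hP => _; apply. Qed.

Lemma subspaceZ a v : P v -> P (a *: v).
Proof. by move=> Pv; rewrite -[_ *: _]addr0; apply: subspaceL Pv subspace0. Qed.

Lemma subspaceD v w : P v -> P w -> P (v + w).
Proof. by rewrite -{2}[v]scale1r; apply: subspaceL. Qed.

Lemma subspace_sum (I : Type) (r : seq I) (Q : pred I) (F : I -> M) :
  (forall i, Q i -> P (F i)) -> P (\sum_(i <- r | Q i) F i).
Proof. by move=> PF; apply: big_ind => //; [apply: subspace0 | apply: subspaceD]. Qed.

Variable phi : M -> N.
Hypothesis hphi : linear_on P phi.

Lemma linear_on0 : phi 0 = 0.
Proof.
have := hphi 1 subspace0 subspace0; rewrite !scale1r addr0 => h.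
by apply: (addIr (phi 0)); rewrite add0r -h.
Qed.

Lemma linear_onZ a v : P v -> phi (a *: v) = a *: phi v.
Proof. by move=> Pv; have := hphi a Pv subspace0; rewrite !addr0 linear_on0 addr0. Qed.

Lemma linear_onD v w : P v -> P w -> phi (v + w) = phi v + phi w.
Proof. by move=> Pv Pw; have := hphi 1 Pv Pw; rewrite !scale1r. Qed.

Lemma linear_on_sum (I : Type) (r : seq I) (F : I -> M) :
  (forall i, P (F i)) -> phi (\sum_(i <- r) F i) = \sum_(i <- r) phi (F i).
Proof.
move=> PF; elim: r => [|i r IH]; first by rewrite !big_nil linear_on0.
by rewrite !big_cons linear_onD ?IH //; apply: subspace_sum => j _.
Qed.

End OneSubspace.

(* Spans are defined impredicatively, so that images under maps that are only
   linear on a subspace are handled without choosing coordinates. *)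
Definition in_span (s : seq M) (v : M) : Prop :=
  forall P, subspace P -> {in s, forall x, P x} -> P v.

Lemma in_span_subspace s : subspace (in_span s).
Proof.
split=> [P hP _|a v w hv hw P hP Ps]; first exact: subspace0.
by apply: (subspaceL hP); [apply: hv | apply: hw].
Qed.

Lemma in_span_subset s t v : {subset s <= t} -> in_span s v -> in_span t v.
Proof. by move=> st hv P hP Pt; apply: hv => // x /st /Pt. Qed.

End Subspaces.

Lemma in_span_map (K : fieldType) (M N : lmodType K) (P : M -> Prop) (L : M -> N) s v :
  subspace P -> linear_on P L -> {in s, forall x, P x} ->
  in_span s v -> in_span (map L s) (L v).
Proof.
move=> hP hL Ps hv Q hQ Qs.
suff [] : P v /\ Q (L v) by [].
apply: (hv (fun u => P u /\ Q (L u))) => [|x xs]; last by split; [apply: Ps | apply/Qs/map_f].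
split=> [|a u w [Pu Qu] [Pw Qw]].
  by split; [apply: subspace0 | rewrite (linear_on0 hP hL); apply: subspace0].
by split; [apply: (subspaceL hP) | rewrite hL //; apply: (subspaceL hQ)].
Qed.

Lemma fin_dimP (K : fieldType) (B : choiceType) (M : comod K B) :
  fin_dim M <->
  exists s, {in s, forall x, csp M x} /\ forall v, csp M v -> in_span s v.
Proof.
split=> [[s [sM hs]]|[s [sM hs]]]; exists s; split.
- by move=> x /(nthP 0) [i lti <-]; apply: sM.
- move=> v /hs [c ->] P hP Ps; apply: subspace_sum => // i _.
  by apply: (subspaceZ hP); apply: Ps; apply: mem_nth.
- by move=> i lti; apply: sM; apply: mem_nth.
pose comb v := exists c : 'I_(size s) -> K, v = \sum_(i < size s) c i *: nth 0 s i.
suff combP : subspace comb /\ {in s, forall x, comb x}.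
  by case: combP => hcomb scomb v /hs/(_ comb hcomb scomb).
split; first split.
- by exists (fun=> 0); rewrite big1 // => i _; rewrite scale0r.
- move=> a v w [c ->] [d ->]; exists (fun i => a * c i + d i).
  by rewrite scaler_sumr -big_split; apply: eq_bigr => i _; rewrite scalerA scalerDl.
move=> x /(nthP 0) [i lti <-]; exists (fun j => (j == Ordinal lti)%:R).
rewrite (bigD1 (Ordinal lti)) //= eqxx scale1r big1 ?addr0 // => j /negbTE ->.
by rewrite scale0r.
Qed.

Section Comodules.
Variables (K : fieldType) (B : choiceType) (S : pred B)
          (D : B -> B -> B -> K) (e : B -> K).

Section OneComodule.
Variable M : comod K B.
Hypothesis hM : is_comod S D e M.

Lemma csp_subspace : subspace (csp M).
Proof. by case: hM => M0 [ML _]. Qed.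

Lemma csp0 : csp M 0. Proof. exact: subspace0 csp_subspace. Qed.

Lemma cco_in v b : csp M v -> csp M (cco M v b).
Proof. by case: hM => _ [_ [+ _]]; apply. Qed.

Lemma cco_linear b : linear_on (csp M) (cco M ^~ b).
Proof. by case: hM => _ [_ [_ [+ _]]] a v w; apply. Qed.

Lemma ccoL a v w b : csp M v -> csp M w ->
  cco M (a *: v + w) b = a *: cco M v b + cco M w b.
Proof. exact: cco_linear. Qed.

Lemma cco0 b : cco M 0 b = 0.
Proof. exact: (linear_on0 csp_subspace (cco_linear b)). Qed.

Lemma ccoZ a v b : csp M v -> cco M (a *: v) b = a *: cco M v b.
Proof. exact: (linear_onZ csp_subspace (cco_linear b) a). Qed.

Lemma cco_finite v : csp M v -> finite_set [set b | cco M v b != 0].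
Proof. by case: hM => _ [_ [_ [_ [+ _]]]]; apply. Qed.

Lemma cco_out v b : csp M v -> ~~ S b -> cco M v b = 0.
Proof. by case: hM => _ [_ [_ [_ [_ [+ _]]]]]; apply. Qed.

Lemma ccoA v b1 b2 : csp M v ->
  cco M (cco M v b2) b1 = \sum_(b \in setT) D b b1 b2 *: cco M v b.
Proof. by case: hM => _ [_ [_ [_ [_ [_ [+ _]]]]]]; apply. Qed.

Lemma cco_counit v : csp M v -> \sum_(b \in setT) e b *: cco M v b = v.
Proof. by case: hM => _ [_ [_ [_ [_ [_ [_ +]]]]]]; apply. Qed.

End OneComodule.

Section Morphisms.
Variables (M N : comod K B) (phi : camb M -> camb N).
Hypotheses (hM : is_comod S D e M) (hphi : comod_hom phi).

Lemma hom_in v : csp M v -> csp N (phi v).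
Proof. by case: hphi => + _; apply. Qed.

Lemma hom_linear : linear_on (csp M) phi.
Proof. by case: hphi => _ [+ _]. Qed.

Lemma hom_cco v b : csp M v -> cco N (phi v) b = phi (cco M v b).
Proof. by case: hphi => _ [_ +]; apply. Qed.

Lemma hom0 : phi 0 = 0.
Proof. exact: (linear_on0 (csp_subspace hM) hom_linear). Qed.

Lemma homZ a v : csp M v -> phi (a *: v) = a *: phi v.
Proof. exact: (linear_onZ (csp_subspace hM) hom_linear a). Qed.

Lemma comod_hom_inverse (psi : camb N -> camb M) :
  (forall w, csp N w -> csp M (psi w)) ->
  (forall v, csp M v -> psi (phi v) = v) ->
  (forall w, csp N w -> phi (psi w) = w) -> comod_hom psi.
Proof.
move=> psi_in psiK phiK; split=> //; split=> [a v w hv hw|v b hv].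
  have [pv pw] := (psi_in v hv, psi_in w hw).
  rewrite -{1}(phiK v hv) -{1}(phiK w hw) -hom_linear // psiK //.
  exact: (subspaceL (csp_subspace hM)).
have pv := psi_in v hv.
by rewrite -{2}(phiK v hv) hom_cco // psiK //; apply: cco_in.
Qed.

End Morphisms.

(** * Grothendieck groups *)

Definition zero_comod (A : lmodType K) : comod K B :=
  Comod A (fun v => v = 0) (fun _ _ => 0).

Lemma zero_comod_fd A : fd_comod S D e (zero_comod A).
Proof.
split; last by exists [::]; split=> // v /= ->; exists (fun=> 0); rewrite big_ord0.
have sum0 (F : B -> K) : \sum_(b \in setT) F b *: (0 : A) = 0.
  by rewrite fsbig1 // => b _; rewrite scaler0.
split=> //; split; first by move=> a v w /= -> ->; rewrite scaler0 addr0.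
split=> //; split; first by move=> *; rewrite scaler0 addr0.
split; first by move=> v _; apply: sub_finite_set (finite_set0 B) => b /=; rewrite eqxx.
by split=> //; split=> [v b1 b2 _|v /= ->]; rewrite sum0.
Qed.

(* 0 -> Z -> Z -> Z -> 0 is exact for the zero comodule Z, so [Z] = [Z] + [Z]. *)
Lemma gr_add_zero A s : gr_eq S D e s ((1, zero_comod A) :: s).
Proof.
set Z := zero_comod A; have fZ := zero_comod_fd A.
have idZ : comod_hom (M := Z) (N := Z) id.
  by split=> //; split=> // a v w /= -> ->; rewrite scaler0 addr0.
have ses : short_exact (M1 := Z) (M := Z) (M2 := Z) id id.
  split=> //; first by move=> u hu; exists u.
  by move=> v /= ->; split=> // _; exists 0.
have Z1_Z2 := gr_trans (gr_ses s fZ fZ fZ ses) (gr_merge S D e 1 1 Z s).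
have Z0_Z1 := gr_trans (gr_sym (gr_merge S D e (-1) 1 Z s))
  (gr_trans (gr_catl [:: (-1, Z)] Z1_Z2) (gr_merge S D e (-1) (1 + 1) Z s)).
rewrite addNr addKr in Z0_Z1.
exact: gr_trans (gr_sym (gr_zero S D e Z s)) Z0_Z1.
Qed.

Lemma gr_eq_iso1 M N s : fd_comod S D e M -> fd_comod S D e N -> comod_iso M N ->
  gr_eq S D e ((1, M) :: s) ((1, N) :: s).
Proof.
move=> fM fN [phi [psi [hphi hpsi psiK phiK]]].
have [[cM _] [cN _]] := (fM, fN).
set Z := zero_comod (camb M).
have ses : short_exact (M1 := Z) (M := M) (M2 := N) (fun _ => 0) phi.
  split=> //.
  - split; first by move=> v _; apply: csp0 cM.
    by split=> [*|v b _]; rewrite ?scaler0 ?addr0 ?(cco0 cM).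
  - by move=> v w /= -> ->.
  - by move=> u hu; exists (psi u); [apply: (hom_in hpsi) | apply: phiK].
  move=> v hv; split=> [phiv0|[w _ <-]]; last exact: hom0 cM hphi.
  by exists 0 => //; rewrite -(psiK v hv) phiv0 (hom0 cN hpsi).
exact: gr_trans (gr_ses s (zero_comod_fd _) fM fN ses) (gr_sym (gr_add_zero _ _)).
Qed.

Lemma gr_eq_iso M N (a : int) s :
  fd_comod S D e M -> fd_comod S D e N -> comod_iso M N ->
  gr_eq S D e ((a, M) :: s) ((a, N) :: s).
Proof.
move=> fM fN iMN.
have gr_nat (k : nat) u : gr_eq S D e ((k%:Z, M) :: u) ((k%:Z, N) :: u).
  elim: k u => [|k IH] u; first exact: gr_trans (gr_zero _ _ _ _ _) (gr_sym (gr_zero _ _ _ _ _)).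
  rewrite -addn1 PoszD addrC.
  apply: gr_trans (gr_sym (gr_merge _ _ _ _ _ _ _)) _.
  apply: gr_trans (gr_eq_iso1 _ fM fN iMN) _.
  exact: gr_trans (gr_catl [:: (1, N)] (IH u)) (gr_merge _ _ _ _ _ _ _).
have cancel_nat (k : nat) X u : gr_eq S D e ((k%:Z, X) :: (- k%:Z, X) :: u) u.
  by apply: gr_trans (gr_merge _ _ _ _ _ _ _) _; rewrite subrr; apply: gr_zero.
case: a => k; first exact: gr_nat.
rewrite NegzE.
apply: gr_trans (gr_catl [:: (_, M)] (gr_sym (cancel_nat k.+1 N s))) _ => /=.
apply: gr_trans (gr_catl [:: (_, M)] (gr_sym (gr_nat k.+1 _))) _ => /=.
by apply: gr_trans (gr_merge _ _ _ _ _ _ _) _; rewrite addNr; apply: gr_zero.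
Qed.

Lemma gr_eq_map_iso (g : comod K B -> comod K B) s :
  (forall M, fd_comod S D e M -> fd_comod S D e (g M) /\ comod_iso (g M) M) ->
  valid_fsum S D e s -> gr_eq S D e (map (fun p => (p.1, g p.2)) s) s.
Proof.
move=> hg; elim: s => [|[a M] s IH] /= => [_|[fM vs]]; first exact: gr_refl.
have [fgM iso] := hg M fM.
apply: gr_trans (gr_eq_iso a _ fgM fM iso) _.
exact: (gr_catl [:: (a, M)] (IH vs)).
Qed.

End Comodules.

Lemma gr_eq_map (K : fieldType) (B1 B2 : choiceType)
    (S1 : pred B1) (D1 : B1 -> B1 -> B1 -> K) (e1 : B1 -> K)
    (S2 : pred B2) (D2 : B2 -> B2 -> B2 -> K) (e2 : B2 -> K)
    (g : comod K B1 -> comod K B2) :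
  (forall M, fd_comod S1 D1 e1 M -> fd_comod S2 D2 e2 (g M)) ->
  (forall M1 M M2 (i : camb M1 -> camb M) (p : camb M -> camb M2),
     fd_comod S1 D1 e1 M1 -> fd_comod S1 D1 e1 M -> fd_comod S1 D1 e1 M2 ->
     short_exact i p ->
     exists (i' : camb (g M1) -> camb (g M)) (p' : camb (g M) -> camb (g M2)),
       short_exact i' p') ->
  forall s t, gr_eq S1 D1 e1 s t ->
  gr_eq S2 D2 e2 (map (fun p => (p.1, g p.2)) s) (map (fun p => (p.1, g p.2)) t).
Proof.
move=> g_fd g_ses s t; elim=> {s t} //=.
- by move=> s; apply: gr_refl.
- by move=> s t _; apply: gr_sym.
- by move=> s t u _ IH1 _; apply: gr_trans.
- by move=> u s t _ IH; rewrite !map_cat; apply: gr_catl.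
- by move=> u s t _ IH; rewrite !map_cat; apply: gr_catr.
- by move=> s t; rewrite !map_cat; apply: gr_comm.
- by move=> *; apply: gr_merge.
- by move=> *; apply: gr_zero.
move=> M1 M M2 i p s f1 f f2 /(g_ses _ _ _ _ _ f1 f f2) [i' [p' ses]].
exact: gr_ses (g_fd _ f1) (g_fd _ f) (g_fd _ f2) ses.
Qed.

(** * The cotensor functor *)

Section CotensorFunctor.
Variables (K : fieldType) (F : groupType) (G : finGroupType)
  (lact : G -> F -> F) (tau : G -> G -> F -> K) (f : F).
Hypotheses (lact1 : forall x, lact 1%g x = x)
  (lactM : forall g g' x, lact (g * g')%g x = lact g (lact g' x))
  (tau1g : forall g x, tau 1%g g x = 1) (taug1 : forall g x, tau g 1%g x = 1)
  (tau_cocycle : forall g g' g'' x, tau g g' (lact g'' x) * tau (g * g')%g g'' x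
                                  = tau g (g' * g'')%g x * tau g' g'' x)
  (tau_neq0 : forall g g' x, tau g g' x != 0).

Local Notation SG := (Gf lact f).
Local Notation DG := (DGf lact tau f).
Local Notation eGf := (@eG K G).
Local Notation SC := (Cf lact f).
Local Notation DC := (DH lact tau).
Local Notation eC := (@eH K F G).
Local Notation T := (cotensor lact tau f).
Local Notation cotsp := (cot_sp lact tau f).
Local Notation cotco := (cot_co lact tau).
Local Notation cothom := (cot_hom lact tau f).

Lemma lactK g x : lact g^-1 (lact g x) = x.
Proof. by rewrite -lactM mulVg lact1. Qed.

Lemma GfE g : Gf lact f g = (lact g f == f). Proof. by []. Qed.

Lemma Gf1 : Gf lact f 1%g. Proof. by rewrite GfE lact1. Qed.

Lemma lact_Gf_neq h x : Gf lact f h -> x != f -> lact h x != f.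
Proof.
by rewrite GfE => /eqP hf; apply: contra => /eqP hx; rewrite -(lactK h x) hx -{1}hf lactK.
Qed.

Lemma DH_sumE (M : lmodType K) (y : G * F -> M) n2 n1 :
  \sum_(n \in [set: G * F]) DH lact tau n n1 n2 *: y n =
  if n1.2 == lact n2.1 n2.2 then tau n1.1 n2.1 n2.2 *: y (n1.1 * n2.1, n2.2)%g else 0.
Proof.
rewrite (fsbigT_single (n1.1 * n2.1, n2.2)%g) => [|[a c]].
  by rewrite /DH /= eqxx mulgK eqxx /=; case: ifP; rewrite ?scale0r.
rewrite /DH /=; case: ifP => [/and3P [/eqP -> /eqP -> _]|_]; last by rewrite scale0r.
by rewrite mulgKV eqxx.
Qed.

Lemma cot_coE (V : comod K G) (x : cot_amb F V) n2 n1 :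
  cotco x n2 n1 =
  if n1.2 == lact n2.1 n2.2 then tau n1.1 n2.1 n2.2 *: x (n1.1 * n2.1, n2.2)%g else 0.
Proof. exact: DH_sumE. Qed.

Lemma Hprime_lcoeff_sumE (V : comod K G) (x : cot_amb F V) b n' :
  \sum_(n \in [set: G * F]) Hprime_lcoeff lact tau f n b n' *: x n =
  if Gf lact f b.1 then cotco x n' b else 0.
Proof.
rewrite /Hprime_lcoeff; case: ifP => _ //.
by rewrite fsbig1 // => n _; rewrite scale0r.
Qed.

Lemma finite_supp_col (V : comod K G) (y : cot_amb F V) c :
  (forall n, n.2 != c -> y n = 0) -> finite_set [set n | y n != 0].
Proof.
move=> yc; apply: (sub_finite_set (B := [set (g, c) | g in [set: G]])).
  move=> [a q] /= yaq; exists a => //; congr pair; apply/eqP.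
  by apply: contraNT yaq => cq; rewrite yc // eq_sym.
exact: finite_image finite_finset.
Qed.

Section OneComodule.
Variable V : comod K G.
Hypothesis hV : is_comod SG DG eGf V.

Lemma ccoGf1 v : csp V v -> cco V v 1%g = v.
Proof.
move=> hv; rewrite -{2}(cco_counit hV hv) (fsbigT_single 1%g) /eG ?eqxx ?scale1r //.
by move=> g /negbTE ->; rewrite scale0r.
Qed.

Lemma ccoGfA v g1 g2 : csp V v ->
  cco V (cco V v g2) g1 = if Gf lact f g2 then tau g1 g2 f *: cco V v (g1 * g2)%g else 0.
Proof.
move=> hv; rewrite (ccoA hV _ _ hv) (fsbigT_single (g1 * g2)%g) => [|g].
  by rewrite /DGf mulgK eqxx andbT; case: ifP; rewrite ?scale0r.
rewrite /DGf; case: ifP => [/andP [_ /eqP ->]|_]; last by rewrite scale0r.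
by rewrite mulgKV eqxx.
Qed.

(* The cotensor condition, tested on the basis elements p_h # f of H'_f. *)
Lemma cotensorP (x : cot_amb F V) :
  cotsp x <->
  [/\ finite_set [set n | x n != 0], (forall n, csp V (x n)),
      (forall a c, lact a c != f -> x (a, c) = 0) &
      (forall h a c, Gf lact f h -> lact a c = f ->
          cco V (x (a, c)) h = tau h a c *: x ((h * a)%g, c))].
Proof.
split=> [[fin [xV xco]]|[fin xV x0 xco]]; split=> //.
- move=> a c acf; have := xco (1%g, f) (a, c) Gf1.
  rewrite /Vf_coact /= eqxx ccoGf1 // Hprime_lcoeff_sumE /= Gf1 cot_coE /=.
  by rewrite eq_sym (negbTE acf).
- move=> h a c hh acf; have := xco (h, f) (a, c) hh.
  by rewrite /Vf_coact /= eqxx Hprime_lcoeff_sumE /= hh cot_coE /= acf eqxx.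
split=> // -[h q] [a c] /= hh; rewrite /Vf_coact /= Hprime_lcoeff_sumE /= hh cot_coE /=.
have [->|qf] := eqVneq q f.
  by have [acf|acf] := eqVneq (lact a c) f; [rewrite xco | rewrite x0 // (cco0 hV)].
have [qac|] := eqVneq q (lact a c) => //.
by rewrite x0 ?scaler0 //= lactM -qac lact_Gf_neq.
Qed.

(* v |-> sum_g v_g (x) f (x) p_g # f *)
Definition lift (v : camb V) : cot_amb F V :=
  fun n => if n.2 == f then cco V v n.1 else 0.

Lemma lift_in v : csp V v -> cotsp (lift v).
Proof.
move=> hv; apply/cotensorP; split.
- by apply: (@finite_supp_col _ _ f) => n /negbTE nf; rewrite /lift nf.
- by move=> n; rewrite /lift; case: ifP => _; [apply: (cco_in hV) | apply: (csp0 hV)].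
- move=> a c acf; rewrite /lift /=; case: eqP => // cf.
  by rewrite (cco_out hV) // GfE -{1}cf.
move=> h a c hh acf; rewrite /lift /=; case: eqP => [cf|]; last by rewrite (cco0 hV) scaler0.
by rewrite ccoGfA // GfE -{1}cf acf eqxx cf.
Qed.

Lemma lift_linear : linear_on (csp V) lift.
Proof.
move=> a v w hv hw; apply/funext => n; rewrite addrfctE scalrfctE /lift /=.
by case: ifP => _; rewrite ?(ccoL hV) // scaler0 addr0.
Qed.

Lemma lift0 : lift 0 = 0.
Proof. exact: (linear_on0 (csp_subspace hV) lift_linear). Qed.

Lemma lift1f v : csp V v -> lift v (1%g, f) = v.
Proof. by move=> hv; rewrite /lift /= eqxx ccoGf1. Qed.

Lemma cot_co_lift (x : cot_amb F V) a c : cotsp x -> lact a c = f ->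
  cotco x (a, c) = lift (x (a, c)).
Proof.
move=> /cotensorP [_ xV x0 xco] acf; apply/funext => -[p q].
rewrite cot_coE /lift /= acf; case: eqP => // _.
have [hp|hp] := boolP (Gf lact f p); first by rewrite xco.
by rewrite (cco_out hV) // x0 ?scaler0 // lactM acf.
Qed.

Lemma cot_co_liftGf v g : csp V v -> Gf lact f g ->
  cotco (lift v) (g, f) = lift (cco V v g).
Proof. by move=> hv /eqP gf; rewrite (cot_co_lift (lift_in hv) gf) /lift /= eqxx. Qed.

Lemma cot_co_finite (x : cot_amb F V) : cotsp x ->
  finite_set [set b | cotco x b != 0].
Proof.
move=> /cotensorP [finx _ _ _].
apply: (sub_finite_set (B := [set: G] `*` [set n.2 | n in [set n | x n != 0]])).
  move=> [p q] /= xpq; split=> //; apply: contrapT => nox; move/negP: xpq; apply.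
  apply/eqP/funext => n1; rewrite cot_coE; case: ifP => // _.
  have [->|] := eqVneq (x (n1.1 * p, q)%g) 0; first by rewrite scaler0.
  by move=> xn; case: nox; exists (n1.1 * p, q)%g.
by apply: finite_setX; [apply: finite_finset | apply: finite_image].
Qed.

Lemma cot_sp_subspace : subspace (@cot_sp _ _ _ lact tau f V).
Proof.
split.
  apply/cotensorP; split=> //; first exact: (@finite_supp_col _ _ f).
    by move=> n; apply: (csp0 hV).
  by move=> h a c _ _; rewrite (cco0 hV) scaler0.
move=> a x w /cotensorP [finx xV x0 xco] /cotensorP [finw wV w0 wco].
apply/cotensorP; split.
- apply: (sub_finite_set (B := [set n | x n != 0] `|` [set n | w n != 0])); last first.
    by rewrite finite_setU.
  move=> n /=; rewrite addrfctE scalrfctE /=.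
  have [->|] := eqVneq (x n) 0; last by left.
  by have [->|] := eqVneq (w n) 0; [rewrite scaler0 addr0 eqxx | right].
- by move=> n; rewrite addrfctE scalrfctE; apply: (subspaceL (csp_subspace hV)).
- by move=> p q pqf; rewrite addrfctE scalrfctE /= x0 ?w0 ?scaler0 ?addr0.
move=> h p q hh pqf; rewrite addrfctE scalrfctE /= (ccoL hV) // xco ?wco //.
by rewrite scalerDr !scalerA mulrC.
Qed.

Lemma cot_co_in (x : cot_amb F V) b : cotsp x -> cotsp (cotco x b).
Proof.
case: b => p q /cotensorP [_ xV x0 xco]; apply/cotensorP; split.
- by apply: (@finite_supp_col _ _ (lact p q)) => n /negbTE npq; rewrite cot_coE npq.
- move=> n; rewrite cot_coE; case: ifP => _; last exact: (csp0 hV).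
  exact: (subspaceZ (csp_subspace hV)).
- move=> a c acf; rewrite cot_coE /=; case: eqP => // cpq.
  by rewrite x0 ?scaler0 // lactM -cpq.
move=> h a c hh acf; rewrite !cot_coE /=.
case: eqP => [cpq|_]; last by rewrite (cco0 hV) scaler0.
rewrite (ccoZ hV) // xco //; last by rewrite lactM -cpq.
by rewrite !scalerA cpq mulgA tau_cocycle mulrC.
Qed.

Lemma cot_coL a (x w : cot_amb F V) b : cotco (a *: x + w) b = a *: cotco x b + cotco w b.
Proof.
apply/funext => n; rewrite !addrfctE !scalrfctE /= !cot_coE.
by case: ifP => _; rewrite ?scaler0 ?addr0 // scalerDr !scalerA mulrC.
Qed.

Lemma cot_co_out (x : cot_amb F V) b : cotsp x -> ~~ SC b -> cotco x b = 0.
Proof.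
case: b => p q /cotensorP [_ _ x0 _] qC; apply/funext => n1; rewrite cot_coE /=.
case: ifP => // _; rewrite x0 ?scaler0 //; apply: contra qC => /eqP qf.
by apply/existsP; exists (n1.1 * p)^-1%g; rewrite -qf lactK.
Qed.

Lemma cot_coA (x : cot_amb F V) b1 b2 :
  cotco (cotco x b2) b1 = \sum_(b \in setT) DH lact tau b b1 b2 *: cotco x b.
Proof.
case: b1 b2 => [p1 q1] [p2 q2]; rewrite DH_sumE /=; apply/funext => -[a c].
rewrite !cot_coE /=; have [->|_] := eqVneq q1 (lact p2 q2); last first.
  by case: ifP; rewrite ?scaler0.
rewrite scalrfctE cot_coE /= lactM; case: ifP => _; last by rewrite scaler0.
by rewrite !scalerA mulgA tau_cocycle mulrC.
Qed.

Lemma cot_co_counit (x : cot_amb F V) : cotsp x -> \sum_(b \in setT) eC b *: cotco x b = x.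
Proof.
move=> hx; apply/funext => -[a c].
rewrite (fsbigT_apply _ (A := [set b | cotco x b != 0])); first last.
- by move=> b /negP/negPn/eqP ->; rewrite scaler0.
- exact: cot_co_finite.
rewrite (fsbigT_single (1%g, c)) /= => [|[p q] pq1].
  by rewrite /eH /= eqxx scale1r cot_coE /= lact1 eqxx taug1 mulg1 scale1r.
rewrite scalrfctE /eH /=; have [p1|] := eqVneq p 1%g; last by rewrite scale0r.
rewrite p1 cot_coE /= lact1; case: eqP => [cq|]; last by rewrite scaler0.
by move: pq1; rewrite p1 cq eqxx.
Qed.

Lemma cotensor_comod : is_comod SC DC eC (T V).
Proof.
have [cot0 cotL] := cot_sp_subspace.
do 3!split=> //; first exact: cot_co_in.
split; first by move=> a x w b _ _; apply: cot_coL.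
split; first exact: cot_co_finite.
split; first exact: cot_co_out.
by split=> [x b1 b2 _|]; [apply: cot_coA | apply: cot_co_counit].
Qed.

End OneComodule.

Section Morphisms.
Variables (V V' : comod K G).
Hypotheses (hV : is_comod SG DG eGf V) (hV' : is_comod SG DG eGf V').

Lemma cot_hom_comod_hom (phi : camb V -> camb V') :
  comod_hom phi -> comod_hom (cothom phi).
Proof.
move=> hphi; have phi0 := hom0 hV hphi.
split=> [x /(cotensorP hV) [finx xV x0 xco]|]; last split.
- apply/(cotensorP hV'); split.
  + apply: sub_finite_set finx => n /=; rewrite /cot_hom.
    by apply: contraNN => /eqP ->; rewrite phi0.
  + by move=> n; apply: (hom_in hphi).
  + by move=> a c acf; rewrite /cot_hom x0.
  + by move=> h a c hh acf; rewrite /cot_hom (hom_cco hphi) // xco // (homZ hV hphi).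
- move=> a x w [_ [xV _]] [_ [wV _]]; apply/funext => n.
  by rewrite /cot_hom !addrfctE !scalrfctE /= (hom_linear hphi).
move=> x b [_ [xV _]]; apply/funext => n; rewrite /cot_hom /= !cot_coE.
by case: ifP => _ //; rewrite (homZ hV hphi).
Qed.

Lemma cot_hom_faithful (phi psi : camb V -> camb V') :
  hom_eq (cothom phi) (cothom psi) -> hom_eq phi psi.
Proof.
move=> eq_phipsi v hv; have := eq_phipsi _ (lift_in hV hv).
by move/(congr1 (fun y => y (1%g, f))); rewrite /cot_hom (lift1f hV hv).
Qed.

(* A morphism chi : ~V -> ~V' is determined by its values on the lifts, read
   at the basis element p_1 # f. *)
Lemma cot_hom_full (chi : camb (T V) -> camb (T V')) :
  comod_hom chi -> exists phi : camb V -> camb V', comod_hom phi /\ hom_eq chi (cothom phi).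
Proof.
move=> hchi; have chi0 := hom0 (cotensor_comod hV) hchi.
have chi_in x : cotsp x -> cotsp (chi x) by apply: (hom_in hchi).
have chi_co x b : cotsp x -> cotco (chi x) b = chi (cotco x b) by apply: (hom_cco hchi).
exists (fun v => chi (lift v) (1%g, f)); split; [split; [|split] |].
- by move=> v hv; have /(cotensorP hV') [_ + _ _] := chi_in _ (lift_in hV hv).
- move=> a v w hv hw /=.
  by rewrite (lift_linear hV) // (hom_linear hchi) ?addrfctE ?scalrfctE //; apply: lift_in.
- move=> v b hv /=; have /(cotensorP hV') [_ chivV _ xco] := chi_in _ (lift_in hV hv).
  have [hb|hb] := boolP (Gf lact f b); last first.
    by rewrite (cco_out hV') // (cco_out hV) // (lift0 hV) chi0.
  rewrite xco // ?lact1 // taug1 scale1r mulg1 -(cot_co_liftGf hV hv hb).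
  rewrite -chi_co; last exact: (lift_in hV hv).
  rewrite (@cot_coE V' (chi (lift v))) /= (eqP hb).
  by rewrite eqxx tau1g scale1r mul1g.
move=> x hx; apply/funext => -[a c]; rewrite /cot_hom.
have [acf|acf] := eqVneq (lact a c) f.
  rewrite -(cot_co_lift hV hx acf) -chi_co //.
  rewrite (@cot_coE V' (chi x)) /= acf.
  by rewrite eqxx tau1g scale1r mul1g.
have /(cotensorP hV') [_ _ x0' _] := chi_in _ hx.
have /(cotensorP hV) [_ _ x0 _] := hx.
by rewrite x0' // x0 // (lift0 hV) chi0.
Qed.

End Morphisms.

(** * The quasi-inverse *)

(* Some g with g |> c = f; junk value 1 if c is not in the orbit of f. *)
Definition tof (c : F) : G := odflt 1%g [pick g | lact g c == f].

Definition orbit_f : seq F := undup [seq lact g f | g <- enum G].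

Lemma tofP a c : lact a c = f -> lact (tof c) c = f.
Proof.
move=> acf; rewrite /tof; case: pickP => [g /eqP //|none].
by have := none a; rewrite acf eqxx.
Qed.

Lemma orbit_fP c : reflect (exists g, c = lact g f) (c \in orbit_f).
Proof.
rewrite mem_undup; apply: (iffP mapP) => [[g _ ->]|[g ->]]; first by exists g.
by exists g; rewrite ?mem_enum.
Qed.

Lemma orbit_f_lact a c : lact a c = f -> c \in orbit_f.
Proof. by move=> acf; apply/orbit_fP; exists a^-1%g; rewrite -acf lactK. Qed.

Lemma tof_orbit c : c \in orbit_f -> lact (tof c) c = f.
Proof. by case/orbit_fP => g ->; apply: (@tofP g^-1%g); rewrite lactK. Qed.

Lemma lact_tofV c : c \in orbit_f -> lact (tof c)^-1%g f = c.
Proof. by move=> cf; rewrite -(tof_orbit cf) lactK. Qed.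

Lemma Cf_orbit b : Cf lact f b = (b.2 \in orbit_f).
Proof. by apply/existsP/orbit_fP => [[g /eqP ->]|[g ->]]; exists g. Qed.

Section FPart.
Variable N : comod K (G * F)%type.
Hypothesis hN : is_comod SC DC eC N.

Lemma ccoCfA w b1 b2 : csp N w -> cco N (cco N w b2) b1 =
  if b1.2 == lact b2.1 b2.2 then tau b1.1 b2.1 b2.2 *: cco N w (b1.1 * b2.1, b2.2)%g else 0.
Proof. by move=> hw; rewrite (ccoA hN _ _ hw) DH_sumE. Qed.

(* N_f = { w | w_(p_1 # f) = w }, a G_f-comodule through the coefficients of
   the p_g # f, g in G_f. *)
Definition fpart : comod K G :=
  Comod (camb N) (fun w => csp N w /\ cco N w (1%g, f) = w)
        (fun w g => if Gf lact f g then cco N w (g, f) else 0).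

Lemma fpart_proj w : csp N w -> csp fpart (cco N w (1%g, f)).
Proof.
by move=> hw; split; [apply: (cco_in hN) | rewrite ccoCfA //= lact1 eqxx tau1g scale1r mul1g].
Qed.

Lemma fpart_subspace : subspace (csp fpart).
Proof.
split; first by split; [apply: (csp0 hN) | apply: (cco0 hN)].
move=> a v w [hv ev] [hw ew]; split; last by rewrite (ccoL hN) // ev ew.
exact: (subspaceL (csp_subspace hN)).
Qed.

Lemma fpart_ccoA v g1 g2 : csp fpart v ->
  cco fpart (cco fpart v g2) g1 = \sum_(g \in setT) DG g g1 g2 *: cco fpart v g.
Proof.
move=> [hv _]; rewrite (fsbigT_single (g1 * g2)%g) => [|g]; last first.
  rewrite /DGf; case: ifP => [/andP [_ /eqP ->]|_]; last by rewrite scale0r.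
  by rewrite mulgKV eqxx.
rewrite /= /DGf mulgK eqxx andbT.
have [hg2|hg2] := boolP (Gf lact f g2); last by rewrite (cco0 hN) scale0r; case: ifP.
have [hg1|hg1] := boolP (Gf lact f g1).
  by rewrite ccoCfA //= (eqP hg2) eqxx GfE lactM (eqP hg2) -GfE hg1.
by rewrite GfE lactM (eqP hg2) -GfE (negbTE hg1) scaler0.
Qed.

Lemma fpart_comod : is_comod SG DG eGf fpart.
Proof.
have [fpart0 fpartL] := fpart_subspace.
split=> //; split=> //; split.
  move=> v g [hv ev] /=; case: ifP => hg; last exact: fpart0.
  by split; [apply: (cco_in hN) | rewrite ccoCfA //= (eqP hg) eqxx tau1g scale1r mul1g].
split; first by move=> a v w g [hv _] [hw _] /=; case: ifP; rewrite ?(ccoL hN) ?scaler0 ?addr0.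
split; first by move=> v _; apply: finite_finset.
split; first by move=> v g _ /= /negbTE ->.
split; first exact: fpart_ccoA.
move=> v [hv ev]; rewrite (fsbigT_single 1%g) /= /eG ?eqxx ?scale1r ?Gf1 //.
by move=> g /negbTE ->; rewrite scale0r.
Qed.

Definition to_cot (w : camb N) : cot_amb F fpart :=
  fun n => if lact n.1 n.2 == f then cco N w n else 0.

Definition of_cot (u : cot_amb F fpart) : camb N :=
  \sum_(c <- orbit_f) (tau (tof c)^-1%g (tof c) c)^-1 *: cco N (u (tof c, c)) ((tof c)^-1%g, f).

Lemma to_cot_in w : csp N w -> cotsp (to_cot w).
Proof.
move=> hw; apply/(cotensorP fpart_comod); split.
- apply: sub_finite_set (cco_finite hN hw) => n /=.
  by rewrite /to_cot; case: ifP => //; rewrite eqxx.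
- move=> n; rewrite /to_cot; case: ifP => nf; last exact: (subspace0 fpart_subspace).
  split; first exact: (cco_in hN).
  by rewrite ccoCfA //= eq_sym nf tau1g scale1r mul1g -surjective_pairing.
- by move=> a c acf; rewrite /to_cot /= (negbTE acf).
move=> h a c hh acf; rewrite /to_cot /= acf eqxx hh ccoCfA //= acf eqxx.
by rewrite lactM acf (eqP hh) eqxx.
Qed.

Lemma of_cot_in u : cotsp u -> csp N (of_cot u).
Proof.
move=> /(cotensorP fpart_comod) [_ uV _ _].
apply: (subspace_sum (csp_subspace hN)) => c _; apply: (subspaceZ (csp_subspace hN)).
exact/(cco_in hN)/(uV _).1.
Qed.

Lemma sum_cco_orbit w : csp N w -> \sum_(c <- orbit_f) cco N w (1%g, c) = w.
Proof.
move=> hw; rewrite -{2}(cco_counit hN hw).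
rewrite -(fsbig_widen [set` [seq (1%g, c) | c <- orbit_f]] setT) //.
- rewrite -fsbig_seq; last by rewrite map_inj_uniq ?undup_uniq // => x y [].
  by rewrite big_map; apply: eq_bigr => c _; rewrite /eH /= eqxx scale1r.
move=> [p q] [_ /=] pq; rewrite /preimage /=.
have [p1|p1] := eqVneq p 1%g; last by rewrite /eH /= (negbTE p1) scale0r.
rewrite (cco_out hN) ?scaler0 // Cf_orbit /=; apply: contra_notN pq => qf.
by rewrite p1; apply/mapP; exists q.
Qed.

Lemma of_cotK w : csp N w -> of_cot (to_cot w) = w.
Proof.
move=> hw; rewrite -{2}(sum_cco_orbit hw) /of_cot big_seq [RHS]big_seq.
apply: eq_bigr => c cf; rewrite /to_cot /= (tof_orbit cf) eqxx ccoCfA ?(cco_in hN) //=.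
by rewrite (tof_orbit cf) eqxx scalerA mulVf ?tau_neq0 // scale1r mulVg.
Qed.

Lemma to_cotK u : cotsp u -> to_cot (of_cot u) = u.
Proof.
move=> hu; have /(cotensorP fpart_comod) [_ uV u0 uco] := hu.
have uN n : csp N (u n) by case: (uV n).
apply/funext => -[a q]; rewrite /to_cot /=.
have [aqf|aqf] := eqVneq (lact a q) f; last by rewrite u0.
have qf := orbit_f_lact aqf.
rewrite /of_cot (linear_on_sum (csp_subspace hN) (cco_linear hN _)); last first.
  by move=> c; apply: (subspaceZ (csp_subspace hN)); apply: (cco_in hN).
rewrite (bigD1_seq q qf (undup_uniq _)) /= big1_seq ?addr0 => [|c /andP [cq cf]]; last first.
  rewrite (ccoZ hN _ _ (cco_in hN _ (uN _))) ccoCfA //= (lact_tofV cf).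
  by rewrite eq_sym (negbTE cq) scaler0.
rewrite (ccoZ hN _ _ (cco_in hN _ (uN _))) ccoCfA //= (lact_tofV qf) eqxx.
set y := tof q; have yqf : lact y q = f := tof_orbit qf.
have ayG : Gf lact f (a * y^-1)%g by rewrite GfE lactM lact_tofV // aqf.
have := uco (a * y^-1)%g y q ayG yqf; rewrite /= ayG => ->.
rewrite mulgKV !scalerA -[RHS]scale1r; congr (_ *: _).
(* the cocycle identity at (a, y^-1, y; q) *)
have := tau_cocycle a y^-1%g y q; rewrite yqf mulVg taug1 mul1r => ->.
by rewrite mulVf.
Qed.

Lemma to_cot_hom : comod_hom (M := N) (N := T fpart) to_cot.
Proof.
split; first exact: to_cot_in.
split=> [a v w hv hw|w b hw].
  apply/funext => n; rewrite addrfctE scalrfctE /to_cot /=.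
  by case: ifP => _; [apply: (ccoL hN) | rewrite scaler0 addr0].
apply/funext => -[a c] /=; rewrite cot_coE /to_cot /=.
have [->|cb] := eqVneq c (lact b.1 b.2).
  by rewrite -lactM ccoCfA //= eqxx; case: ifP; rewrite ?scaler0.
by rewrite ccoCfA //= (negbTE cb); case: ifP.
Qed.

Lemma cotensor_fpart_iso : comod_iso (T fpart) N.
Proof.
exists of_cot, to_cot; split; [| exact: to_cot_hom | exact: to_cotK | exact: of_cotK].
apply: (comod_hom_inverse hN to_cot_hom) => [u|w|u]; [exact: of_cot_in | exact: of_cotK |].
exact: to_cotK.
Qed.

End FPart.

(* The element of ~V whose value at (tof c, c) is v c, for every c in the orbit;
   [cotensorP] forces all its other values. *)
Definition cot_glue (V : comod K G) (v : F -> camb V) : cot_amb F V :=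
  fun n => if lact n.1 n.2 == f then
    (tau (n.1 * (tof n.2)^-1)%g (tof n.2) n.2)^-1 *: cco V (v n.2) (n.1 * (tof n.2)^-1)%g
  else 0.

Lemma Gf_mul_tofV a c : lact a c = f -> Gf lact f (a * (tof c)^-1)%g.
Proof. by move=> acf; rewrite GfE lactM -{1}(tofP acf) lactK acf. Qed.

Section Glue.
Variable V : comod K G.
Hypothesis hV : is_comod SG DG eGf V.

Lemma cot_glue_in (v : F -> camb V) : (forall c, csp V (v c)) -> cotsp (cot_glue v).
Proof.
move=> vV; apply/(cotensorP hV); split.
- apply: (sub_finite_set (B := [set (a, lact a^-1%g f) | a in [set: G]])); last first.
    exact: finite_image finite_finset.
  move=> [a c]; rewrite /cot_glue /=; case: ifP => [/eqP acf _|_]; last by rewrite eqxx.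
  by exists a => //; rewrite -acf lactK.
- move=> n; rewrite /cot_glue; case: ifP => _; last exact: (csp0 hV).
  by apply: (subspaceZ (csp_subspace hV)); apply: (cco_in hV).
- by move=> a c acf; rewrite /cot_glue /= (negbTE acf).
move=> h a c hh acf; rewrite /cot_glue /= acf eqxx lactM acf (eqP hh) eqxx.
set y := tof c; have yc : lact y c = f := tofP acf.
rewrite (ccoZ hV _ _ (cco_in hV _ (vV c))) ccoGfA ?Gf_mul_tofV // !scalerA mulgA.
congr (_ *: _); apply: (mulIf (tau_neq0 (h * a * y^-1)%g y c)).
(* the cocycle identity at (h, a y^-1, y; c) *)
have := tau_cocycle h (a * y^-1)%g y c; rewrite yc mulgKV mulgA => cocycle.
by rewrite mulfVK // -mulrA cocycle (mulrC (tau h a c)) mulrA mulVf ?mul1r.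
Qed.

Lemma cot_glueK (x : cot_amb F V) : cotsp x -> cot_glue (fun c => x (tof c, c)) = x.
Proof.
move=> /(cotensorP hV) [_ _ x0 xco]; apply/funext => -[a c]; rewrite /cot_glue /=.
case: eqP => [acf|/eqP acf]; last by rewrite x0.
by rewrite xco ?Gf_mul_tofV ?(tofP acf) // mulgKV scalerA mulVf ?scale1r.
Qed.

Lemma cot_glue_linear :
  linear_on (fun v : F -> camb V => forall c, csp V (v c)) (@cot_glue V).
Proof.
move=> a v w vV wV; apply/funext => n; rewrite /cot_glue /= !addrfctE !scalrfctE /=.
case: ifP => _; last by rewrite scaler0 addr0.
by rewrite (ccoL hV) // scalerDr !scalerA mulrC.
Qed.

Definition cot_glue1 (c : F) (w : camb V) : cot_amb F V :=
  cot_glue (fun c' => if c' == c then w else 0).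

Lemma cot_glue1_in c w : csp V w -> cotsp (cot_glue1 c w).
Proof. by move=> hw; apply: cot_glue_in => c'; case: ifP => _ //; apply: (csp0 hV). Qed.

Lemma cot_glue1_linear c : linear_on (csp V) (cot_glue1 c).
Proof.
have single_in w : csp V w -> forall c', csp V (if c' == c then w else 0).
  by move=> hw c'; case: ifP => _ //; apply: (csp0 hV).
move=> a v w hv hw.
rewrite /cot_glue1 -(cot_glue_linear a (single_in _ hv) (single_in _ hw)).
congr cot_glue; apply/funext => c'; rewrite addrfctE scalrfctE /=.
by case: ifP => _ //; rewrite scaler0 addr0.
Qed.

Lemma cot_glue_decomp x : cotsp x -> x = \sum_(c <- orbit_f) cot_glue1 c (x (tof c, c)).
Proof.
move=> hx; have /(cotensorP hV) [_ _ x0 _] := hx.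
apply/funext => -[a q]; rewrite fct_sumE.
have [aqf|aqf] := eqVneq (lact a q) f; last first.
  by rewrite x0 // big1 // => c _; rewrite /cot_glue1 /cot_glue /= (negbTE aqf).
rewrite (bigD1_seq q (orbit_f_lact aqf) (undup_uniq _)) /= big1_seq ?addr0.
  by rewrite -{1}(cot_glueK hx) /cot_glue1 /cot_glue /= aqf !eqxx.
move=> c /andP [cq _]; rewrite /cot_glue1 /cot_glue /= aqf eqxx eq_sym (negbTE cq).
by rewrite (cco0 hV) scaler0.
Qed.

Lemma cotensor_fin_dim : fin_dim V -> fin_dim (T V).
Proof.
move=> /fin_dimP [s [sV spanV]]; apply/fin_dimP.
exists (flatten [seq map (cot_glue1 c) s | c <- orbit_f]); split.
  by move=> x /flatten_mapP [c _ /mapP [w /sV hw ->]]; apply: cot_glue1_in.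
move=> x hx; rewrite (cot_glue_decomp hx) big_seq.
apply: (subspace_sum (in_span_subspace _)) => c cf.
apply: in_span_subset (in_span_map (csp_subspace hV) (cot_glue1_linear c) sV _).
  by move=> y ys; apply/flatten_mapP; exists c.
by apply: spanV; have /(cotensorP hV) [_ + _ _] := hx; apply.
Qed.

Lemma fpart_cotensor_iso : comod_iso (fpart (T V)) V.
Proof.
have lift_hom : comod_hom (M := V) (N := fpart (T V)) (@lift V).
  split=> [v hv|]; first by split; [apply: lift_in | rewrite /= (cot_co_liftGf hV hv Gf1) ccoGf1].
  split; first exact: (lift_linear hV).
  move=> v g hv /=; case: ifP => hg; first exact: cot_co_liftGf.
  by rewrite (cco_out hV) ?hg // (lift0 hV).
have liftK v : csp V v -> lift v (1%g, f) = v by apply: lift1f.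
have evalK x : csp (fpart (T V)) x -> lift (x (1%g, f)) = x.
  by move=> [hx ex]; rewrite -(cot_co_lift hV hx (lact1 f)); exact: ex.
have eval_in x : csp (fpart (T V)) x -> csp V (x (1%g, f)).
  by move=> [/(cotensorP hV) [_ xV _ _] _]; apply: xV.
exists (fun x => x (1%g, f)), (@lift V); split=> //.
exact: (comod_hom_inverse hV lift_hom eval_in liftK evalK).
Qed.

End Glue.

(** * Exactness *)

Lemma cot_hom_glue (V V' : comod K G) (phi : camb V -> camb V') (v : F -> camb V) :
  is_comod SG DG eGf V -> comod_hom phi -> (forall c, csp V (v c)) ->
  cothom phi (cot_glue v) = cot_glue (fun c => phi (v c)).
Proof.
move=> hV hphi vV; apply/funext => n; rewrite /cot_hom /cot_glue.
case: ifP => _; last exact: (hom0 hV hphi).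
by rewrite (homZ hV hphi _ (cco_in hV _ (vV _))) (hom_cco hphi _ (vV _)).
Qed.

Section CotensorExact.
Variables (M1 M M2 : comod K G) (i : camb M1 -> camb M) (p : camb M -> camb M2).
Hypotheses (h1 : is_comod SG DG eGf M1) (h : is_comod SG DG eGf M)
  (h2 : is_comod SG DG eGf M2) (ses : short_exact i p).

Let hi : comod_hom i. Proof. by case: ses. Qed.
Let hp : comod_hom p. Proof. by case: ses. Qed.
Let i_inj v w : csp M1 v -> csp M1 w -> i v = i w -> v = w.
Proof. by case: ses => _ _ + _ _; apply. Qed.
Let p_surj u : csp M2 u -> exists2 v, csp M v & p v = u.
Proof. by case: ses => _ _ _ + _; apply. Qed.
Let ker_p v : csp M v -> (p v = 0 <-> exists2 w, csp M1 w & i w = v).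
Proof. by case: ses => _ _ _ _; apply. Qed.

Lemma cot_hom_surj y : cotsp y -> exists2 x, cotsp x & cothom p x = y.
Proof.
move=> hy; have /(cotensorP h2) [_ yV _ _] := hy.
have lifts c : exists v, csp M v /\ p v = y (tof c, c).
  by have [v hv pv] := p_surj (yV (tof c, c)); exists v.
have [v vP] := choice lifts.
exists (cot_glue v); first exact: (cot_glue_in h (fun c => (vP c).1)).
rewrite (cot_hom_glue h hp (fun c => (vP c).1)) -[RHS](cot_glueK h2 hy).
by congr cot_glue; apply/funext => c; apply: (vP c).2.
Qed.

Lemma cot_hom_ker x : cotsp x ->
  (cothom p x = 0 <-> exists2 w, cotsp w & cothom i w = x).
Proof.
move=> hx; have /(cotensorP h) [finx xV x0 xco] := hx.
split=> [px0|[w /(cotensorP h1) [_ wV _ _] <-]]; last first.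
  by apply/funext => n; apply/(ker_p (hom_in hi (wV n))); exists (w n).
have preimages n : exists w, csp M1 w /\ i w = x n.
  have /(ker_p (xV n)) [w hw iw] : p (x n) = 0 by exact: (congr1 (fun y => y n) px0).
  by exists w.
have [w wP] := choice preimages.
have w0 n : x n = 0 -> w n = 0.
  move=> xn0; apply: i_inj; [exact: (wP n).1 | exact: (csp0 h1) |].
  by rewrite (wP n).2 xn0 (hom0 h1 hi).
exists w; last by apply/funext => n; rewrite /cot_hom (wP n).2.
apply/(cotensorP h1); split=> [||a c acf|g a c hg acf].
- by apply: sub_finite_set finx => n /=; apply: contraNN => /eqP /w0 ->.
- by move=> n; apply: (wP n).1.
- exact/w0/x0.
apply: i_inj; [exact/(cco_in h1)/(wP _).1 | exact/(subspaceZ (csp_subspace h1))/(wP _).1 |].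
by rewrite -(hom_cco hi _ (wP _).1) (wP _).2 xco // (homZ h1 hi _ (wP _).1) (wP _).2.
Qed.

Lemma cotensor_short_exact : short_exact (cothom i) (cothom p).
Proof.
split; [exact: cot_hom_comod_hom | exact: cot_hom_comod_hom | | exact: cot_hom_surj |].
- move=> x w /(cotensorP h1) [_ xV _ _] /(cotensorP h1) [_ wV _ _] ixw.
  by apply/funext => n; apply: i_inj => //; apply: (congr1 (fun y => y n) ixw).
- exact: cot_hom_ker.
Qed.

End CotensorExact.

Lemma fpart_hom (N N' : comod K (G * F)%type) (phi : camb N -> camb N') :
  is_comod SC DC eC N -> comod_hom phi -> comod_hom (M := fpart N) (N := fpart N') phi.
Proof.
move=> hN hphi; split=> [v [hv ev]|].
  by split; rewrite ?(hom_cco hphi) ?ev //; apply: hom_in.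
split=> [a v w [hv _] [hw _]|v g [hv _] /=]; first exact: (hom_linear hphi).
by case: ifP => _; [apply: (hom_cco hphi) | rewrite (hom0 hN hphi)].
Qed.

Lemma fpart_short_exact (N1 N N2 : comod K (G * F)%type)
    (i : camb N1 -> camb N) (p : camb N -> camb N2) :
  is_comod SC DC eC N1 -> is_comod SC DC eC N -> short_exact i p ->
  short_exact (M1 := fpart N1) (M := fpart N) (M2 := fpart N2) i p.
Proof.
move=> h1 h [hi hp i_inj p_surj ker_p].
split; [exact: fpart_hom h1 hi | exact: fpart_hom h hp | | |].
- by move=> v w [hv _] [hw _]; apply: i_inj.
- move=> u [hu eu]; have [v hv pv] := p_surj u hu.
  by exists (cco N v (1%g, f)); [apply: fpart_proj | rewrite -(hom_cco hp) // pv eu].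
move=> v [hv ev]; split=> [/(ker_p _ hv) [w hw iw]|[w [hw _] iw]]; last first.
  by apply/(ker_p _ hv); exists w.
by exists (cco N1 w (1%g, f)); [apply: fpart_proj | rewrite -(hom_cco hi) // iw ev].
Qed.

Lemma fpart_fd (N : comod K (G * F)%type) :
  fd_comod SC DC eC N -> fd_comod SG DG eGf (fpart N).
Proof.
case=> h /fin_dimP [s [sN spanN]]; split; first exact: fpart_comod.
apply/fin_dimP; exists (map (cco N ^~ (1%g, f)) s); split.
  by move=> _ /mapP [w /sN hw ->]; apply: fpart_proj.
move=> v [hv ev]; rewrite -ev.
exact: (in_span_map (csp_subspace h) (cco_linear h _) sN (spanN _ hv)).
Qed.

Lemma cotensor_fd V : fd_comod SG DG eGf V -> fd_comod SC DC eC (T V).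
Proof. by case=> hV finV; split; [apply: cotensor_comod | apply: cotensor_fin_dim]. Qed.

(** * The induced map on Grothendieck groups *)

Lemma cot_fsum_gr_eq s t :
  gr_eq SG DG eGf s t -> gr_eq SC DC eC (cot_fsum lact tau f s) (cot_fsum lact tau f t).
Proof.
apply: gr_eq_map => [|M1 M M2 i p [h1 _] [h _] [h2 _] ses]; first exact: cotensor_fd.
by exists (cothom i), (cothom p); apply: cotensor_short_exact.
Qed.

Lemma fpart_fsum_gr_eq s t : gr_eq SC DC eC s t ->
  gr_eq SG DG eGf (map (fun q => (q.1, fpart q.2)) s) (map (fun q => (q.1, fpart q.2)) t).
Proof.
apply: gr_eq_map => [|N1 N N2 i p [h1 _] [h _] _ ses]; first exact: fpart_fd.
by exists i, p; apply: fpart_short_exact.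
Qed.

Lemma cot_fsum_gr_eqE s t : valid_fsum SG DG eGf s -> valid_fsum SG DG eGf t ->
  gr_eq SG DG eGf s t <-> gr_eq SC DC eC (cot_fsum lact tau f s) (cot_fsum lact tau f t).
Proof.
move=> vs vt; split=> [|/fpart_fsum_gr_eq]; first exact: cot_fsum_gr_eq.
have fpartT_iso V : fd_comod SG DG eGf V ->
    fd_comod SG DG eGf (fpart (T V)) /\ comod_iso (fpart (T V)) V.
  by case=> hV finV; split; [apply: fpart_fd; apply: cotensor_fd | apply: fpart_cotensor_iso].
rewrite /cot_fsum -!map_comp => fpartT_st.
apply: gr_trans (gr_sym (gr_eq_map_iso fpartT_iso vs)) _.
exact: gr_trans fpartT_st (gr_eq_map_iso fpartT_iso vt).
Qed.

Lemma cot_fsum_surj t : valid_fsum SC DC eC t ->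
  exists2 s, valid_fsum SG DG eGf s & gr_eq SC DC eC (cot_fsum lact tau f s) t.
Proof.
move=> vt; exists (map (fun q => (q.1, fpart q.2)) t).
  by elim: t vt => [|[a N] t IH] //= [fN vt]; split; [apply: fpart_fd | apply: IH].
have Tfpart_iso N : fd_comod SC DC eC N ->
    fd_comod SC DC eC (T (fpart N)) /\ comod_iso (T (fpart N)) N.
  by case=> hN finN; split; [apply: cotensor_fd; apply: fpart_fd | apply: cotensor_fpart_iso].
by rewrite /cot_fsum -map_comp; apply: (gr_eq_map_iso Tfpart_iso).
Qed.

End CotensorFunctor.

Close Scope classical_set_scope.
Close Scope ring_scope.

Theorem corollary4p4
  (K : closedFieldType) (hK : [pchar K]%R =i pred0)
  (F : groupType) (G : finGroupType)
  (lact : G -> F -> F) (ract : G -> F -> G)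
  (hmp : is_matched_pair lact ract)
  (sigma : G -> F -> F -> K) (tau : G -> G -> F -> K)
  (hst : sigma_tau_conditions lact ract sigma tau)
  (f : F) :
  let SG := Gf lact f in
  let DG := DGf lact tau f in
  let eG := @eG K G in
  let SC := Cf lact f in
  let DC := DH lact tau in
  let eC := @eH K F G in
  let T := cotensor lact tau f in
  (* V |-> ~V is a functor from right k^{G_f}_{tau_f}-comodules to right C_f-comodules *)
  (forall V : comod K G, is_comod SG DG eG V -> is_comod SC DC eC (T V)) /\
  (forall (V V' : comod K G) (phi : camb V -> camb V'),
      is_comod SG DG eG V -> is_comod SG DG eG V' -> comod_hom phi ->
      comod_hom (cot_hom lact tau f phi)) /\
  (* faithful *)
  (forall (V V' : comod K G) (phi psi : camb V -> camb V'),
      is_comod SG DG eG V -> is_comod SG DG eG V' -> comod_hom phi -> comod_hom psi ->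
      hom_eq (cot_hom lact tau f phi) (cot_hom lact tau f psi) -> hom_eq phi psi) /\
  (* full *)
  (forall (V V' : comod K G) (chi : camb (T V) -> camb (T V')),
      is_comod SG DG eG V -> is_comod SG DG eG V' -> comod_hom chi ->
      exists phi : camb V -> camb V',
        comod_hom phi /\ hom_eq chi (cot_hom lact tau f phi)) /\
  (* essentially surjective *)
  (forall N : comod K (G * F)%type, is_comod SC DC eC N ->
      exists V : comod K G, is_comod SG DG eG V /\ comod_iso (T V) N) /\
  (* the induced map [V] |-> [~V] on Grothendieck groups of finite-dimensional
     comodules is well defined and an isomorphism *)
  (forall V : comod K G, fd_comod SG DG eG V -> fin_dim (T V)) /\
  (forall s t : fsum K G, valid_fsum SG DG eG s -> valid_fsum SG DG eG t ->
      (gr_eq SG DG eG s t <-> gr_eq SC DC eC (cot_fsum lact tau f s) (cot_fsum lact tau f t))) /\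
  (forall t : fsum K (G * F)%type, valid_fsum SC DC eC t ->
      exists2 s : fsum K G, valid_fsum SG DG eG s & gr_eq SC DC eC (cot_fsum lact tau f s) t).
Proof.
case: hmp => lact1 [lactM _].
case: hst => _ [tau_neq0 [_ [_ [_ [tau1 [_ [tau_cocycle _]]]]]]].
have tau1g g x : tau 1%g g x = 1%R by case: (tau1 g x).
have taug1 g x : tau g 1%g x = 1%R by case: (tau1 g x).
move=> SG DG eG' SC DC eC T.
split; first by move=> V hV; apply: cotensor_comod.
split; first by move=> V V' phi hV hV'; apply: cot_hom_comod_hom.
split; first by move=> V V' phi psi hV _ _ _; apply: cot_hom_faithful.
split; first by move=> V V' chi hV hV'; apply: cot_hom_full.
split; first by move=> N hN; exists (fpart lact f N); split;
  [apply: fpart_comod | apply: cotensor_fpart_iso].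
split; first by move=> V [hV finV]; apply: cotensor_fin_dim.
by split; [apply: cot_fsum_gr_eqE | apply: cot_fsum_surj].
Qed.
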